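(* Let $V=\{0,\alpha,\beta\}$ be the three-element ordered set with least element $0$ and two incomparable maximal elements $\alpha,\beta$. There is no algebra $A$ such that the ordered set $(\mathrm{Princ}(A),\subseteq)$ is isomorphic to $V$.
   Context: For an algebra $A$, $\mathrm{Princ}(A)$ denotes the set of principal congruences $\mathrm{con}(a,b)$ ($a,b\in A$) of $A$, ordered by inclusion, where $\mathrm{con}(a,b)$ is the least congruence of $A$ containing $(a,b)$. *)

From Stdlib Require Import Fin.

Record algebra := Algebra {
  carrier :> Type;
  op_sym : Type;
  arity : op_sym -> nat;
  interp : forall f : op_sym, (Fin.t (arity f) -> carrier) -> carrier
}.

Definition relation (A : algebra) := carrier A -> carrier A -> Prop.

Definition is_congruence (A : algebra) (R : relation A) : Prop :=
  (forall x, R x x) /\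
  (forall x y, R x y -> R y x) /\
  (forall x y z, R x y -> R y z -> R x z) /\
  (forall (f : op_sym A) (xs ys : Fin.t (arity A f) -> carrier A),
      (forall i, R (xs i) (ys i)) -> R (interp A f xs) (interp A f ys)).

Definition con (A : algebra) (a b : carrier A) : relation A :=
  fun x y => forall R : relation A, is_congruence A R -> R a b -> R x y.

Definition rel_eq (A : algebra) (R S : relation A) : Prop :=
  forall x y, R x y <-> S x y.
Definition rel_sub (A : algebra) (R S : relation A) : Prop :=
  forall x y, R x y -> S x y.

Definition is_principal (A : algebra) (R : relation A) : Prop :=
  exists a b, rel_eq A R (con A a b).

Inductive V : Type := V0 | Valpha | Vbeta.
Definition V_le (v w : V) : Prop :=
  match v, w with
  | V0, _ => True
  | Valpha, Valpha => True
  | Vbeta, Vbeta => True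
  | _, _ => False
  end.

(* (Princ(A), ⊆) is order-isomorphic to V: a map phi : V -> Princ(A)
   that is surjective onto Princ(A) and an order embedding
   (injectivity follows from order reflection). *)
Definition Princ_iso_V (A : algebra) : Prop :=
  exists phi : V -> relation A,
    (forall v, is_principal A (phi v)) /\
    (forall R, is_principal A R -> exists v, rel_eq A R (phi v)) /\
    (forall v w, V_le v w <-> rel_sub A (phi v) (phi w)).

(* Every pair (p, q) lies in con(p, q), which is a principal congruence and
   hence contained in one of the two maximal elements alpha, beta.  So the
   union of these two equivalence relations is the full relation.  But if two
   equivalence relations cover all pairs, one of them is already full: if
   (u, v) is not in R, then any z is S-related to u or to v (not R-related to
   both), and transitivity through (u, v) puts every pair in S.  A full
   relation contains the other one, contradicting incomparability of alpha
   and beta. *)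
From Stdlib Require Import Classical RelationClasses.

Section UnionFull.

Variables (T : Type) (R S : T -> T -> Prop).
Context `{Transitive T R} `{Symmetric T S} `{Transitive T S}.
Hypothesis union_full : forall x y, R x y \/ S x y.

Lemma union_full_either_full : (forall x y, R x y) \/ (forall x y, S x y).
Proof.
  destruct (classic (forall x y, R x y)) as [HR | HnR]; [now left | right].
  apply not_all_ex_not in HnR as [u HnR].
  apply not_all_ex_not in HnR as [v Huv].
  assert (Su : forall z, S u z).
  { intro z. destruct (union_full u z) as [Ruz | Suz]; [| exact Suz].
    destruct (union_full z v) as [Rzv | Szv].
    - exfalso. apply Huv. now transitivity z.
    - destruct (union_full u v) as [Ruv | Suv]; [contradiction |].
      transitivity v; [exact Suv | now symmetry]. }
  intros x y. transitivity u; [symmetry |]; apply Su.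
Qed.

End UnionFull.

Section PrincipalCongruences.

Variable A : algebra.

Lemma con_self (a b : A) : con A a b a b.
Proof. intros R _ Hab; exact Hab. Qed.

Lemma con_sym (a b : A) : Symmetric (con A a b).
Proof.
  intros x y Hxy R HR Hab. pose proof HR as (_ & Hsym & _).
  exact (Hsym _ _ (Hxy R HR Hab)).
Qed.

Lemma con_trans (a b : A) : Transitive (con A a b).
Proof.
  intros x y z Hxy Hyz R HR Hab. pose proof HR as (_ & _ & Htrans & _).
  exact (Htrans _ _ _ (Hxy R HR Hab) (Hyz R HR Hab)).
Qed.

Lemma principal_sym (R : relation A) : is_principal A R -> Symmetric R.
Proof. intros (a & b & E) x y Hxy. apply E, con_sym, E, Hxy. Qed.

Lemma principal_trans (R : relation A) : is_principal A R -> Transitive R.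
Proof.
  intros (a & b & E) x y z Hxy Hyz. apply E.
  apply (con_trans a b x y z); apply E; assumption.
Qed.

End PrincipalCongruences.

Theorem corollary1p2 : forall A : algebra, ~ Princ_iso_V A.
Proof.
  intros A [phi [Hprinc [Hsurj Hord]]].
  assert (cover : forall p q, phi Valpha p q \/ phi Vbeta p q).
  { intros p q.
    destruct (Hsurj (con A p q)) as [v Ev]; [exists p, q; intros x y; reflexivity |].
    assert (Hv : phi v p q) by exact (proj1 (Ev p q) (con_self A p q)).
    destruct v; [left; exact (proj1 (Hord V0 Valpha) I p q Hv) | left | right]; exact Hv. }
  destruct (@union_full_either_full _ _ _ (principal_trans _ _ (Hprinc Valpha))
              (principal_sym _ _ (Hprinc Vbeta))
              (principal_trans _ _ (Hprinc Vbeta)) cover) as [Hfull | Hfull].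
  - apply (Hord Vbeta Valpha). intros x y _. apply Hfull.
  - apply (Hord Valpha Vbeta). intros x y _. apply Hfull.
Qed.
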